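(* Let $K$ be a field and let $\lambda_1,\dots,\lambda_n$ be pairwise relatively prime positive integers, $\boldsymbol{\lambda}=(\lambda_1,\dots,\lambda_n)$, and $\Lambda=\langle1/\lambda_1,\dots,1/\lambda_n\rangle$ the additive submonoid of $\mathbb{Q}_{\ge}$ they generate. Then $I(\boldsymbol{\lambda})\subseteq K[x_1,\dots,x_n]$ is normal if and only if $\Lambda$ is quasinormal.
   Context: $I(\boldsymbol{\lambda})$ is the integral closure in $K[x_1,\dots,x_n]$ of $(x_1^{\lambda_1},\dots,x_n^{\lambda_n})$; an ideal is normal if all its positive powers are integrally closed. A submonoid $S$ of $\mathbb{Q}_{\ge}$ is quasinormal if whenever $x\in S$ and $x\ge p$ for a positive integer $p$, there exist $y_1,\dots,y_p\in S$ with $y_i\ge 1$ for all $i$ and $x=y_1+\cdots+y_p$. *)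

From HB Require Import structures.
From mathcomp Require Import all_boot all_order all_algebra.
From mathcomp Require Import mpoly.
Set Implicit Arguments. Unset Strict Implicit. Unset Printing Implicit Defensive.
Import Order.TTheory GRing.Theory Num.Theory.
Local Open Scope ring_scope.

Section Ideals.
Variable R : comRingType.

Definition ideal_span (S : R -> Prop) : R -> Prop :=
  fun f => exists (s : seq R) (c : seq R),
    (forall g, g \in s -> S g) /\ size c = size s /\
    f = \sum_(i < size s) c`_i * s`_i.

Definition ideal_mul (I J : R -> Prop) : R -> Prop :=
  ideal_span (fun x => exists a b, I a /\ J b /\ x = a * b).

Fixpoint ideal_pow (I : R -> Prop) (k : nat) : R -> Prop :=
  match k with
  | 0%N => fun _ => True
  | k'.+1 => ideal_mul (ideal_pow I k') I
  end.

Definition integral_over_ideal (I : R -> Prop) (f : R) : Prop :=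
  exists (m : nat) (a : nat -> R), (0 < m)%N /\
    (forall i, (1 <= i <= m)%N -> ideal_pow I i (a i)) /\
    f ^+ m + \sum_(1 <= i < m.+1) a i * f ^+ (m - i) = 0.

Definition integral_closure (I : R -> Prop) : R -> Prop :=
  integral_over_ideal I.

Definition integrally_closed (I : R -> Prop) : Prop :=
  forall f, integral_over_ideal I f -> I f.

Definition normal_ideal (I : R -> Prop) : Prop :=
  forall k, (0 < k)%N -> integrally_closed (ideal_pow I k).
End Ideals.

Definition I_lambda (K : fieldType) (n : nat) (lam : 'I_n -> nat)
  : {mpoly K[n]} -> Prop :=
  integral_closure
    (ideal_span (fun f : {mpoly K[n]} => exists i : 'I_n, f = 'X_i ^+ lam i)).

Definition Lambda (n : nat) (lam : 'I_n -> nat) : rat -> Prop :=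
  fun x => exists c : 'I_n -> nat, x = \sum_(i < n) (c i)%:R / (lam i)%:R.

Definition quasinormal (S : rat -> Prop) : Prop :=
  forall (x : rat) (p : nat), S x -> (0 < p)%N -> p%:R <= x ->
    exists y : 'I_p -> rat, (forall i, S (y i) /\ 1 <= y i) /\
      x = \sum_(i < p) y i.

From HB Require Import structures.
From mathcomp Require Import all_boot all_order all_algebra.
From mathcomp Require Import mpoly ring zify.
Import Order.TTheory GRing.Theory Num.Theory.
Local Open Scope ring_scope.
Set Implicit Arguments. Unset Strict Implicit. Unset Printing Implicit Defensive.

(* Give the monomial x^m the weight wt m = sum_i m_i / lam_i.  Substituting
   x_i |-> x_i t^(L / lam_i), with L = prod_i lam_i, turns L * wt into a t-degree,
   and comparing lowest t-terms in an equation of integral dependence shows that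
   whatever is integral over an ideal supported in weight >= k is itself supported
   in weight >= k.  Conversely (x^m)^L is a product of L * wt m generators
   x_i^lam_i.  Hence I(lam)^k consists of the polynomials supported on sums of
   k monomials of weight >= 1, and its integral closure of those supported in
   weight >= k: I(lam) is normal iff every monomial of weight >= k splits into
   k monomials of weight >= 1.  A factor x_i^lam_i has weight 1 and can always be
   split off; once every m_i < lam_i, coprimality makes x^m determined by its
   weight, so splittings of x^m are exactly the decompositions of wt m required
   by quasinormality of Lambda. *)

Section IdealPowers.
Variable R : comNzRingType.
Implicit Types (S Q : R -> Prop) (f g : R).

Lemma ideal_span_ind S (P : R -> Prop) :
  P 0 -> (forall f g, P f -> P g -> P (f + g)) ->
  (forall r f, P f -> P (r * f)) -> (forall g, S g -> P g) ->
  forall f, ideal_span S f -> P f.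
Proof.
move=> P0 PD PM PS _ [s [c [sS [_ ->]]]].
elim/big_ind: _ => // i _; apply/PM/PS/sS/mem_nth/ltn_ord.
Qed.

Lemma ideal_span_gen S g : S g -> ideal_span S g.
Proof.
move=> Sg; exists [:: g], [:: 1]; do 2?split => //.
  by move=> x; rewrite inE => /eqP ->.
by rewrite big_ord1 mul1r.
Qed.

Lemma ideal_span0 S : ideal_span S 0.
Proof. by exists [::], [::]; rewrite big_ord0. Qed.

Lemma ideal_spanD S f g : ideal_span S f -> ideal_span S g -> ideal_span S (f + g).
Proof.
move=> [s1 [c1 [S1 [size1 ->]]]] [s2 [c2 [S2 [size2 ->]]]].
exists (s1 ++ s2), (c1 ++ c2); split.
  by move=> x; rewrite mem_cat => /orP[/S1|/S2].
split; first by rewrite !size_cat size1 size2.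
rewrite size_cat big_split_ord; congr (_ + _); apply: eq_bigr => i _.
  by rewrite /= !nth_cat size1 ltn_ord.
by rewrite /= !nth_cat size1 ltnNge leq_addr addKn.
Qed.

Lemma ideal_spanMl S r f : ideal_span S f -> ideal_span S (r * f).
Proof.
move=> [s [c [sS [size_c ->]]]]; exists s, (map (GRing.mul r) c).
do 2?split => //; first by rewrite size_map.
rewrite mulr_sumr; apply: eq_bigr => i _.
by rewrite (nth_map 0) ?size_c // mulrA.
Qed.

Lemma ideal_pow0 Q k : ideal_pow Q k 0.
Proof. by case: k => //= k; apply: ideal_span0. Qed.

Lemma ideal_powD Q k f g :
  ideal_pow Q k f -> ideal_pow Q k g -> ideal_pow Q k (f + g).
Proof. by case: k => //= k; apply: ideal_spanD. Qed.

Lemma ideal_powMl Q k r f : ideal_pow Q k f -> ideal_pow Q k (r * f).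
Proof. by case: k => //= k; apply: ideal_spanMl. Qed.

Lemma ideal_pow_sum Q k (I : Type) (s : seq I) (P : pred I) (F : I -> R) :
  (forall i, P i -> ideal_pow Q k (F i)) -> ideal_pow Q k (\sum_(i <- s | P i) F i).
Proof. by move=> QF; elim/big_ind: _ => //; [apply: ideal_pow0|apply: ideal_powD]. Qed.

Lemma ideal_pow_prod Q N (xs : seq R) :
  (forall x, x \in xs -> Q x) -> (N <= size xs)%N ->
  ideal_pow Q N (\prod_(x <- xs) x).
Proof.
elim: N xs => [//|N IH] [//|x xs] Qxs /= le_N_xs; apply: ideal_span_gen.
exists (\prod_(y <- xs) y), x; do 2?split; last by rewrite big_cons mulrC.
  by apply: IH => // y xs_y; apply: Qxs; rewrite inE xs_y orbT.
by apply: Qxs; rewrite inE eqxx.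
Qed.

Lemma ideal_pow_pow_prod Q p r (xs : seq R) :
  (forall x, x \in xs -> Q x) -> (p * r <= size xs)%N ->
  ideal_pow (ideal_pow Q p) r (\prod_(x <- xs) x).
Proof.
elim: r xs => [//|r IH] xs Qxs le_pr_xs /=; apply: ideal_span_gen.
exists (\prod_(x <- drop p xs) x), (\prod_(x <- take p xs) x); split.
  apply: IH => [x /mem_drop/Qxs //|]; rewrite size_drop; lia.
split; last by rewrite -{1}(cat_take_drop p xs) big_cat mulrC.
by apply: ideal_pow_prod => [x /mem_take/Qxs //|]; rewrite size_take; case: ltnP; lia.
Qed.

Lemma integral_over_ideal_of_pow Q f N :
  (0 < N)%N -> ideal_pow Q N (f ^+ N) -> integral_over_ideal Q f.
Proof.
move=> N_gt0 QfN; exists N, (fun i => if i == N then - f ^+ N else 0).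
split=> //; split=> [i _|].
  by case: eqP => [->|_]; [rewrite -mulN1r; apply: ideal_powMl|apply: ideal_pow0].
rewrite big_nat_recr //= eqxx subnn mulr1 big1_seq ?add0r ?subrr // => i.
by rewrite mem_index_iota => /andP[_ /andP[_ lt_iN]]; rewrite ltn_eqF //= mul0r.
Qed.

End IdealPowers.

Section MonomialSupport.
Variables (n : nat) (R : comNzRingType).
Local Notation mon := 'X_{1..n}.
Implicit Types (A B : mon -> Prop) (m : mon) (f g : {mpoly R[n]}).

Definition supported_on A f := forall m, m \in msupp f -> A m.

Definition upward_closed A := forall m e, A m -> A (m + e)%MM.

Definition mset_add A B m := exists m1 m2, [/\ A m1, B m2 & m = (m1 + m2)%MM].

(* As for [ideal_pow], the 0-th power is everything rather than [{0}]. *)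
Fixpoint mset_pow A k : mon -> Prop :=
  if k is k'.+1 then mset_add (mset_pow A k') A else fun=> True.

Lemma supported_on_mpolyX A m : supported_on A 'X_[m] <-> A m.
Proof.
rewrite /supported_on msuppX; split=> [|Am m']; first by apply; rewrite inE.
by rewrite inE => /eqP ->.
Qed.

Lemma supported_on_sub A B f :
  (forall m, A m -> B m) -> supported_on A f -> supported_on B f.
Proof. by move=> AB Af m /Af /AB. Qed.

Lemma supported_onM A B f g :
  supported_on A f -> supported_on B g -> supported_on (mset_add A B) (f * g).
Proof.
move=> Af Bg m /msuppM_le /allpairsP[[m1 m2] /= [/Af ? /Bg ? ->]].
by exists m1, m2.
Qed.

Lemma supported_on_ideal_span A S : upward_closed A ->
  (forall g, S g -> supported_on A g) ->
  forall f, ideal_span S f -> supported_on A f.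
Proof.
move=> upA SA; apply: ideal_span_ind => //.
- by move=> m; rewrite msupp0.
- by move=> f g Af Ag m /msuppD_le; rewrite mem_cat => /orP[/Af|/Ag].
- move=> r f Af m /msuppM_le /allpairsP[[m1 m2] /= [_ /Af ? ->]].
  by rewrite addmC; apply: upA.
Qed.

Lemma upward_closed_mset_pow A k : upward_closed A -> upward_closed (mset_pow A k).
Proof.
case: k => [//|k] upA m e [m1 [m2 [? ? ->]]].
by exists m1, (m2 + e)%MM; split; [|apply: upA|rewrite addmA].
Qed.

Lemma supported_on_ideal_pow A Q : upward_closed A ->
  (forall g, Q g -> supported_on A g) ->
  forall k f, ideal_pow Q k f -> supported_on (mset_pow A k) f.
Proof.
move=> upA QA; elim=> [//|k IH] f.
apply: supported_on_ideal_span; first exact: upward_closed_mset_pow.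
by move=> _ [g [h [/IH Ag [Qh ->]]]]; apply: supported_onM Ag (QA h Qh).
Qed.

Lemma mset_powP A k m : upward_closed A -> (0 < k)%N ->
  mset_pow A k m <-> exists c : 'I_k -> mon,
    (forall j, A (c j)) /\ m = (\sum_(j < k) c j)%MM.
Proof.
move=> upA; elim: k m => [//|k IH] m _; split.
  move=> [m1 [m2 [Am1 Am2 ->]]]; case: k IH Am1 => [|k] IH Am1.
    exists (fun=> (m1 + m2)%MM); rewrite big_ord1; split=> // _.
    by rewrite addmC; apply: upA.
  have [c [Ac ->]] := (IH m1 isT).1 Am1.
  exists (fun j : 'I_k.+2 => if (j < k.+1)%N then c (inord j) else m2); split.
    by move=> j; case: ifP.
  rewrite [RHS]big_ord_recr /= ltnn; congr (_ + _)%MM.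
  by apply: eq_bigr => j _; rewrite ltn_ord inord_val.
move=> [c [Ac ->]]; rewrite big_ord_recr /=.
exists (\sum_(j < k) c (widen_ord (leqnSn k) j))%MM, (c ord_max); split=> //.
case: k IH c Ac => [//|k] IH c Ac; apply/IH => //.
by exists (fun j => c (widen_ord (leqnSn k.+1) j)).
Qed.

End MonomialSupport.

Section VanishingCoefficients.
Variable R : nzRingType.
Implicit Types P Q : {poly R}.

Definition vanishes_below P a := forall j, (j < a)%N -> P`_j = 0.

Lemma vanishes_belowM P Q a b : vanishes_below P a -> vanishes_below Q b ->
  vanishes_below (P * Q) (a + b).
Proof.
move=> Pa Qb j lt_j; rewrite coefM big1 // => i _.
have [lt_ia|le_ai] := ltnP i a; first by rewrite Pa ?mul0r.
by rewrite Qb ?mulr0 //; have := ltn_ord i; lia.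
Qed.

Lemma coefM_vanishes_below P Q a b : vanishes_below P a -> vanishes_below Q b ->
  (P * Q)`_(a + b) = P`_a * Q`_b.
Proof.
move=> Pa Qb; rewrite coefM (bigD1 (Ordinal (leq_addr b a : (a < (a + b).+1)%N))) //=.
rewrite addKn big1 ?addr0 // => i /eqP ne_ia.
have [lt_ia|le_ai] := ltnP i a; first by rewrite Pa ?mul0r.
have lt_ai : (a < i)%N.
  by rewrite ltn_neqAle le_ai andbT; apply/eqP => eq_ai; apply/ne_ia/val_inj.
by rewrite Qb ?mulr0 //; have := ltn_ord i; lia.
Qed.

Lemma vanishes_belowX P a k : vanishes_below P a -> vanishes_below (P ^+ k) (k * a).
Proof.
move=> Pa; elim: k => [|k IH] j; first by rewrite mul0n.
by rewrite exprS mulSn; apply: vanishes_belowM.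
Qed.

Lemma coefX_vanishes_below P a k : vanishes_below P a -> (P ^+ k)`_(k * a) = P`_a ^+ k.
Proof.
move=> Pa; elim: k => [|k IH]; first by rewrite mul0n coef1.
by rewrite exprS mulSn coefM_vanishes_below ?IH ?exprS //; apply: vanishes_belowX.
Qed.

Lemma coef_integral_equation P (A : nat -> {poly R}) M v a : (v < a)%N ->
  vanishes_below P v -> (forall i, (1 <= i <= M)%N -> vanishes_below (A i) (i * a)) ->
  (P ^+ M + \sum_(1 <= i < M.+1) A i * P ^+ (M - i))`_(M * v) = P`_v ^+ M.
Proof.
move=> lt_va Pv Aa; rewrite coefD coef_sum coefX_vanishes_below // big1_seq ?addr0 //.
move=> i /andP[_]; rewrite mem_index_iota ltnS => /andP[i_gt0 le_iM].
have range_i : (1 <= i <= M)%N by rewrite i_gt0.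
rewrite (vanishes_belowM (Aa i range_i) (vanishes_belowX (k := M - i) Pv)) //.
rewrite -[in X in (X < _)%N](subnKC le_iM) mulnDl ltn_add2r.
by rewrite ltn_pmul2l.
Qed.

End VanishingCoefficients.

Section WeightedDegree.
Variables (n : nat) (R : idomainType) (d : 'I_n -> nat).
Local Notation mon := 'X_{1..n}.
Implicit Types (m : mon) (f : {mpoly R[n]}).

Definition wdeg m := (\sum_(i < n) m i * d i)%N.

Definition wdeg_ge a m := (a <= wdeg m)%N.

Lemma wdegD m1 m2 : wdeg (m1 + m2)%MM = (wdeg m1 + wdeg m2)%N.
Proof. by rewrite /wdeg -big_split; apply: eq_bigr => i _; rewrite mnmDE mulnDl. Qed.

Lemma upward_closed_wdeg_ge a : upward_closed (wdeg_ge a).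
Proof. by move=> m e le_am; rewrite /wdeg_ge wdegD (leq_trans le_am) ?leq_addr. Qed.

Lemma mset_pow_wdeg_ge a k m : mset_pow (wdeg_ge a) k m -> wdeg_ge (k * a) m.
Proof.
elim: k m => [//|k IH] m [m1 [m2 [/IH ? ? ->]]].
by rewrite /wdeg_ge wdegD mulSnr leq_add.
Qed.

Definition wgrade : {mpoly R[n]} -> {poly {mpoly R[n]}} :=
  mmap (polyC \o @mpolyC n R) (fun i => ('X_i)%:P * 'X^(d i)).

HB.instance Definition _ := GRing.RMorphism.on wgrade.

Lemma coef_wgrade f j :
  (wgrade f)`_j = \sum_(m <- msupp f) (f@_m *: 'X_[m]) * (j == wdeg m)%:R.
Proof.
rewrite /wgrade /mmap coef_sum; apply: eq_bigr => m _ /=.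
rewrite /mmap1; under eq_bigr => i _ do rewrite exprMn -rmorphXn -exprM.
rewrite big_split /= -rmorph_prod -mpolyXE_id prodrXr mulrA -rmorphM coefCM coefXn.
by rewrite mul_mpolyC /wdeg; under eq_bigr => i _ do rewrite mulnC.
Qed.

Lemma mcoeff_coef_wgrade f m : ((wgrade f)`_(wdeg m))@_m = f@_m.
Proof.
rewrite coef_wgrade [in RHS](mpolyE f) !raddf_sum; apply: eq_bigr => m' _ /=.
have [->|ne_m'm] := eqVneq m' m; first by rewrite eqxx mulr1.
rewrite mcoeffZ mcoeffX (negbTE ne_m'm) mulr0.
case: (_ == _); rewrite ?mulr0 ?mcoeff0 // mulr1.
by rewrite mcoeffZ mcoeffX (negbTE ne_m'm) mulr0.
Qed.

Lemma wgrade_vanishes_below a f :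
  supported_on (wdeg_ge a) f -> vanishes_below (wgrade f) a.
Proof.
move=> fa j lt_ja; rewrite coef_wgrade big1_seq // => m /andP[_ /fa le_am].
by rewrite ltn_eqF ?mulr0 // (leq_trans lt_ja le_am).
Qed.

Lemma integral_supported_wdeg_ge (Q : {mpoly R[n]} -> Prop) a f :
  (forall g, Q g -> supported_on (wdeg_ge a) g) ->
  integral_over_ideal Q f -> supported_on (wdeg_ge a) f.
Proof.
move=> Qa [M [c [_ [Qc eq_f]]]].
have [/allP //|/allPn[m0 f_m0 m0_low]] := boolP (all (wdeg_ge a) (msupp f)).
have coef_m0 : (wgrade f)`_(wdeg m0) != 0.
  apply: contraTneq f_m0 => eq0.
  by rewrite mcoeff_msupp -mcoeff_coef_wgrade eq0 mcoeff0 eqxx.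
have [v fv min_v] := ex_minnP (ex_intro (fun j => (wgrade f)`_j != 0) _ coef_m0).
have lt_va : (v < a)%N by apply: leq_ltn_trans (min_v _ coef_m0) _; rewrite ltnNge.
have low_f : vanishes_below (wgrade f) v.
  by move=> j lt_jv; apply/eqP; apply: contraTT lt_jv => /min_v; rewrite -leqNgt.
have low_c i : (1 <= i <= M)%N -> vanishes_below (wgrade (c i)) (i * a).
  move=> range_i; apply: wgrade_vanishes_below.
  have := supported_on_ideal_pow (@upward_closed_wdeg_ge a) Qa (Qc i range_i).
  exact: supported_on_sub (@mset_pow_wdeg_ge a i).
move/(congr1 (fun g => (wgrade g)`_(M * v))): eq_f.
rewrite rmorph0 coef0 rmorphD rmorphXn rmorph_sum.
under eq_bigr => i _ do rewrite rmorphM rmorphXn.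
by rewrite (coef_integral_equation lt_va) // => /eqP; rewrite expf_eq0 (negbTE fv) andbF.
Qed.

End WeightedDegree.

Section LambdaWeight.
Variables (n : nat) (lam : 'I_n -> nat).
Local Notation mon := 'X_{1..n}.
Implicit Types m : mon.

Definition cofactor i := (\prod_(j < n | j != i) lam j)%N.

Definition lamprod := (\prod_(i < n) lam i)%N.

Definition wt m : rat := \sum_(i < n) (m i)%:R / (lam i)%:R.

Definition wt_ge (k : nat) m := k%:R <= wt m.

Lemma wtD m1 m2 : wt (m1 + m2)%MM = wt m1 + wt m2.
Proof. by rewrite /wt -big_split; apply: eq_bigr => i _; rewrite mnmDE natrD mulrDl. Qed.

Lemma wt_sum k (c : 'I_k -> mon) : wt (\sum_(j < k) c j)%MM = \sum_(j < k) wt (c j).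
Proof.
apply: (big_morph wt wtD).
by rewrite /wt big1 // => i _; rewrite mnm0E mul0r.
Qed.

Lemma wt_ge0 m : 0 <= wt m.
Proof. by apply: sumr_ge0 => i _; rewrite divr_ge0 ?ler0n. Qed.

Lemma upward_closed_wt_ge k : upward_closed (wt_ge k).
Proof. by move=> m e; rewrite /wt_ge wtD => /le_trans; apply; rewrite lerDl wt_ge0. Qed.

Lemma mset_pow_wt_ge k m : mset_pow (wt_ge 1) k m -> wt_ge k m.
Proof.
elim: k m => [|k IH] m; first by rewrite /wt_ge wt_ge0.
by move=> [m1 [m2 [/IH ? ? ->]]]; rewrite /wt_ge wtD -natr1 lerD.
Qed.

Definition wt_splits := forall k m, wt_ge k m -> mset_pow (wt_ge 1) k m.

Lemma LambdaP x : Lambda lam x <-> exists m, x = wt m.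
Proof.
split=> [[c ->]|[m ->]]; last by exists m.
by exists [multinom c i | i < n]; apply: eq_bigr => i _; rewrite mnmE.
Qed.

Hypothesis lam_gt0 : forall i, (0 < lam i)%N.

Lemma lamprodE i : lamprod = (lam i * cofactor i)%N.
Proof. by rewrite /lamprod (bigD1 i). Qed.

Lemma lamprod_gt0 : (0 < lamprod)%N.
Proof. by rewrite prodn_gt0. Qed.

Lemma cofactor_gt0 i : (0 < cofactor i)%N.
Proof. by rewrite prodn_gt0. Qed.

Lemma wt_wdeg m : wt m = (wdeg cofactor m)%:R / lamprod%:R.
Proof.
rewrite /wt /wdeg natr_sum mulr_suml; apply: eq_bigr => i _.
have lam_neq0 : (lam i)%:R != 0 :> rat by rewrite pnatr_eq0 -lt0n.
have cof_neq0 : (cofactor i)%:R != 0 :> rat by rewrite pnatr_eq0 -lt0n cofactor_gt0.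
by rewrite (lamprodE i) !natrM; field; rewrite lam_neq0 cof_neq0.
Qed.

Lemma wt_geE k m : wt_ge k m = wdeg_ge cofactor (k * lamprod) m.
Proof. by rewrite /wt_ge wt_wdeg ler_pdivlMr ?ltr0n ?lamprod_gt0 // -natrM ler_nat. Qed.

Lemma wt_mnm1 i : wt (U_(i) *+ lam i)%MM = 1.
Proof.
rewrite /wt (bigD1 i) //= big1 => [|j ne_ji].
  by rewrite mulmnE mnm1E eqxx mul1n addr0 divff // pnatr_eq0 -lt0n.
by rewrite mulmnE mnm1E eq_sym (negbTE ne_ji) mul0n mul0r.
Qed.

Lemma integral_supported_wt_ge (R : idomainType) (Q : {mpoly R[n]} -> Prop) k f :
  (forall g, Q g -> supported_on (wt_ge k) g) ->
  integral_over_ideal Q f -> supported_on (wt_ge k) f.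
Proof.
move=> Qk intf; have wt_geE' m : wt_ge k m <-> wdeg_ge cofactor (k * lamprod) m.
  by rewrite wt_geE.
apply: supported_on_sub (fun m => iffRL (wt_geE' m)) _.
apply: integral_supported_wdeg_ge intf => g /Qk Qg.
exact: supported_on_sub (fun m => iffLR (wt_geE' m)) Qg.
Qed.

End LambdaWeight.

Section IdealLambda.
Variables (K : fieldType) (n : nat) (lam : 'I_n -> nat).
Hypothesis lam_gt0 : forall i, (0 < lam i)%N.
Local Notation mon := 'X_{1..n}.
Local Notation I := (@I_lambda K n lam).
Implicit Types (m : mon) (f : {mpoly K[n]}).

Definition lam_generator f := exists i, f = 'X_i ^+ lam i.

Definition lam_generators m : seq {mpoly K[n]} :=
  flatten [seq nseq (m i * cofactor lam i) ('X_i ^+ lam i) | i <- enum 'I_n].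

Lemma size_lam_generators m : size (lam_generators m) = wdeg (cofactor lam) m.
Proof.
rewrite size_flatten /shape -map_comp sumnE big_map big_enum /=.
by apply: eq_bigr => i _; rewrite size_nseq.
Qed.

Lemma prod_lam_generators m : \prod_(g <- lam_generators m) g = 'X_[m] ^+ lamprod lam.
Proof.
rewrite big_flatten big_map big_enum /= mpolyXE_id -prodrXl.
apply: eq_bigr => i _; rewrite big_nseq iter_mulr_1 -!exprM.
by rewrite (lamprodE lam i) mulnCA.
Qed.

Lemma mem_lam_generators m g : g \in lam_generators m -> lam_generator g.
Proof. by move=> /flattenP[s /mapP[i _ ->] /nseqP[-> _]]; exists i. Qed.

Lemma mpolyX_I_lambda m : wt_ge lam 1 m -> I 'X_[m].
Proof.
move=> wt_m; apply: (integral_over_ideal_of_pow (lamprod_gt0 lam_gt0)).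
rewrite -prod_lam_generators; apply: ideal_pow_prod => [g /mem_lam_generators|].
  exact: ideal_span_gen.
by rewrite size_lam_generators; move: wt_m; rewrite (wt_geE lam_gt0) /wdeg_ge mul1n.
Qed.

Lemma lam_generator_I g : lam_generator g -> I g.
Proof.
by move=> [i ->]; rewrite mpolyXn; apply: mpolyX_I_lambda; rewrite /wt_ge wt_mnm1.
Qed.

Lemma I_lambda_supported f : I f -> supported_on (wt_ge lam 1) f.
Proof.
apply: (integral_supported_wt_ge lam_gt0); apply: supported_on_ideal_span.
  exact: upward_closed_wt_ge.
by move=> _ [i ->]; rewrite mpolyXn; apply/supported_on_mpolyX; rewrite /wt_ge wt_mnm1.
Qed.

Lemma ideal_pow_I_lambda_mpolyX k m :
  ideal_pow I k 'X_[m] <-> mset_pow (wt_ge lam 1) k m.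
Proof.
split.
  move/(supported_on_ideal_pow (@upward_closed_wt_ge _ lam 1) I_lambda_supported).
  by move/supported_on_mpolyX.
elim: k m => [//|k IH] m [m1 [m2 [/IH ? ? ->]]].
apply: ideal_span_gen; exists 'X_[m1], 'X_[m2].
by rewrite mpolyXD; do 2?split => //; apply: mpolyX_I_lambda.
Qed.

Lemma integral_ideal_pow_I_lambda_supported k f :
  integral_over_ideal (ideal_pow I k) f -> supported_on (wt_ge lam k) f.
Proof.
apply: (integral_supported_wt_ge lam_gt0) => g.
move/(supported_on_ideal_pow (@upward_closed_wt_ge _ lam 1) I_lambda_supported).
exact: supported_on_sub (@mset_pow_wt_ge _ lam k).
Qed.

Lemma mpolyX_integral_ideal_pow_I_lambda k m :
  wt_ge lam k m -> integral_over_ideal (ideal_pow I k) 'X_[m].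
Proof.
move=> wt_m; apply: (integral_over_ideal_of_pow (lamprod_gt0 lam_gt0)).
rewrite -prod_lam_generators; apply: ideal_pow_pow_prod => [g /mem_lam_generators|].
  exact: lam_generator_I.
by rewrite size_lam_generators; move: wt_m; rewrite (wt_geE lam_gt0).
Qed.

Lemma normal_I_lambdaP : normal_ideal I <-> wt_splits lam.
Proof.
split=> [normalI [//|k] m wt_m | splits k k_gt0 f intf].
  by apply/ideal_pow_I_lambda_mpolyX/normalI/mpolyX_integral_ideal_pow_I_lambda.
rewrite (mpolyE f) big_seq; apply: ideal_pow_sum => m f_m.
rewrite -mul_mpolyC; apply/ideal_powMl/ideal_pow_I_lambda_mpolyX/splits => //.
exact: integral_ideal_pow_I_lambda_supported intf m f_m.
Qed.

End IdealLambda.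

Lemma eqn_modMr_coprime a x y p : coprime a p ->
  (x * a == y * a %[mod p])%N = (x == y %[mod p])%N.
Proof.
move=> cop_ap; wlog le_xy : x y / (x <= y)%N.
  by move=> W; case/orP: (leq_total x y) => /W //; rewrite eq_sym [RHS]eq_sym.
rewrite eq_sym [RHS]eq_sym !eqn_mod_dvd ?leq_mul2r ?le_xy ?orbT //.
by rewrite -mulnBl Gauss_dvdl // coprime_sym.
Qed.

Section Quasinormal.
Variables (n : nat) (lam : 'I_n -> nat).
Local Notation mon := 'X_{1..n}.
Implicit Types m : mon.

Lemma quasinormal_of_wt_splits : wt_splits lam -> quasinormal (Lambda lam).
Proof.
move=> splits x p /LambdaP[m ->] p_gt0 /splits.
case/(mset_powP _ (@upward_closed_wt_ge _ lam 1) p_gt0) => c [c_ge1 ->].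
exists (fun j => wt lam (c j)); split; last exact: wt_sum.
by move=> j; split; [apply/LambdaP; exists (c j) | exact: c_ge1].
Qed.

Hypothesis lam_gt0 : forall i, (0 < lam i)%N.
Hypothesis lam_coprime : forall i j, i != j -> coprime (lam i) (lam j).

Lemma coprime_cofactor i : coprime (cofactor lam i) (lam i).
Proof.
apply: (big_ind (fun x => coprime x (lam i))) => [|x y ? ?|j /lam_coprime //].
  exact: coprime1n.
by rewrite coprimeMl; apply/andP.
Qed.

Lemma wdeg_cofactor_mod m i :
  (wdeg (cofactor lam) m = m i * cofactor lam i %[mod lam i])%N.
Proof.
rewrite /wdeg (bigD1 i) //= -modnDmr.
have /eqP -> : (lam i %| \sum_(j < n | j != i) m j * cofactor lam j)%N.
  apply: dvdn_sum => j ne_ji; apply: dvdn_mull.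
  by rewrite /cofactor (bigD1 i) 1?eq_sym //= dvdn_mulr.
by rewrite addn0.
Qed.

(* Modulo [lam i] the weight determines [m i], as [cofactor lam i] is a unit there. *)
Lemma wt_reduced_inj c m : (forall i, m i < lam i)%N -> wt lam c = wt lam m -> c = m.
Proof.
move=> m_small; rewrite !(wt_wdeg lam_gt0).
have L_neq0 : (lamprod lam)%:R != 0 :> rat by rewrite pnatr_eq0 -lt0n lamprod_gt0.
move/(mulIf (invr_neq0 L_neq0))/eqP; rewrite eqr_nat => /eqP eq_wdeg.
have le_mc i : (m i <= c i)%N.
  have : (c i == m i %[mod lam i])%N.
    by rewrite -(eqn_modMr_coprime _ _ (coprime_cofactor i)) -!wdeg_cofactor_mod eq_wdeg.
  by move/eqP; rewrite (modn_small (m_small i)) => <-; apply: leq_mod.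
have le_terms i : (m i * cofactor lam i <= c i * cofactor lam i)%N.
  by rewrite leq_mul2r le_mc orbT.
have := (leqif_sum (fun i (_ : true) => leqif_eq (le_terms i))).2.
rewrite -[X in X == _]/(wdeg _ m) -[X in _ == X]/(wdeg _ c) eq_wdeg eqxx.
move=> /esym/forall_inP eq_terms; apply/mnmP => i; apply/esym/eqP.
by rewrite -(eqn_pmul2r (cofactor_gt0 lam_gt0 i)) eq_terms.
Qed.

Lemma wt_splits_of_quasinormal : quasinormal (Lambda lam) -> wt_splits lam.
Proof.
move=> qn; elim=> [//|k IH] m wt_m.
have [i le_lam_m|m_small] := pickP (fun i => lam i <= m i)%N.
  have le_um : (U_(i) *+ lam i <= m)%MM.
    apply/mnm_lepP => j; rewrite mulmnE mnm1E.
    by case: eqP => [<-|_]; rewrite ?mul1n ?mul0n.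
  exists (m - U_(i) *+ lam i)%MM, (U_(i) *+ lam i)%MM; split; last by rewrite submK.
    apply: IH; move: wt_m.
    by rewrite /wt_ge -{1}(submK le_um) wtD (wt_mnm1 lam_gt0) -natr1 lerD2r.
  by rewrite /wt_ge (wt_mnm1 lam_gt0).
have {}m_small i : (m i < lam i)%N by rewrite ltnNge m_small.
have Lm : Lambda lam (wt lam m) by apply/LambdaP; exists m.
have [y [y_ge1 sum_y]] := qn _ _ Lm (ltn0Sn k) wt_m.
have [c wt_c] := fin_all_exists (fun j => iffLR (LambdaP _ _) (y_ge1 j).1).
have -> : m = (\sum_(j < k.+1) c j)%MM.
  by apply/esym/wt_reduced_inj => //; rewrite wt_sum sum_y; apply/eq_bigr.
apply/(mset_powP _ (@upward_closed_wt_ge _ lam 1) (ltn0Sn k)); exists c; split=> // j.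
by rewrite /wt_ge -wt_c; exact: (y_ge1 j).2.
Qed.

Lemma quasinormal_LambdaP : quasinormal (Lambda lam) <-> wt_splits lam.
Proof. by split; [apply: wt_splits_of_quasinormal | apply: quasinormal_of_wt_splits]. Qed.

End Quasinormal.

Unset Implicit Arguments.
Theorem proposition4p7 (K : fieldType) (n : nat) (lam : 'I_n -> nat) :
  (forall i, (0 < lam i)%N) ->
  (forall i j, i != j -> coprime (lam i) (lam j)) ->
  (normal_ideal (@I_lambda K n lam) <-> quasinormal (Lambda lam)).
Proof.
move=> lam_gt0 lam_coprime.
apply: iff_trans (normal_I_lambdaP K lam_gt0) _.
exact: iff_sym (quasinormal_LambdaP lam_gt0 lam_coprime).
Qed.
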